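(* Let $X$ be a Banach space and $(x_n^* )_{n\ge1}$ a sequence in $X^*$ which does not converge to $0$ in the weak topology $\sigma(X^*,X^{**})$. Then there exist a subsequence $(x^*_{n_k})_{k\ge1}$ and $\delta>0$ such that for every finite set $F\subseteq\mathbb N$ there exists $x_F\in X$ with $\|x_F\|_X=1$ and $|\langle x_F,x^*_{n_k}\rangle|\ge\delta$ for all $k\in F$. Moreover, if $X=E$ is a Banach lattice and $x_n^*\ge0$ for all $n$, then $x_F$ may be chosen with $x_F\ge 0$. *)

From Stdlib Require Import Reals List.
Open Scope R_scope.

Record NormedSpace := {
  ns_carrier :> Type;
  vzero : ns_carrier;
  vadd : ns_carrier -> ns_carrier -> ns_carrier;
  vopp : ns_carrier -> ns_carrier;
  vscal : R -> ns_carrier -> ns_carrier;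
  vnorm : ns_carrier -> R;
  vaddA : forall x y z, vadd x (vadd y z) = vadd (vadd x y) z;
  vaddC : forall x y, vadd x y = vadd y x;
  vadd0 : forall x, vadd vzero x = x;
  vaddN : forall x, vadd x (vopp x) = vzero;
  vscal1 : forall x, vscal 1 x = x;
  vscalA : forall a b x, vscal a (vscal b x) = vscal (a * b) x;
  vscalDl : forall a b x, vscal (a + b) x = vadd (vscal a x) (vscal b x);
  vscalDr : forall a x y, vscal a (vadd x y) = vadd (vscal a x) (vscal a y);
  vnorm_eq0 : forall x, vnorm x = 0 -> x = vzero;
  vnormZ : forall a x, vnorm (vscal a x) = Rabs a * vnorm x;
  vnorm_triangle : forall x y, vnorm (vadd x y) <= vnorm x + vnorm y
}.
Arguments vzero {_}. Arguments vadd {_}. Arguments vopp {_}.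
Arguments vscal {_}. Arguments vnorm {_}.

Definition vsub {X : NormedSpace} (x y : X) : X := vadd x (vopp y).

Definition complete (X : NormedSpace) : Prop :=
  forall u : nat -> X,
    (forall eps, 0 < eps -> exists N, forall m n, (N <= m)%nat -> (N <= n)%nat ->
        vnorm (vsub (u m) (u n)) < eps) ->
    exists l : X, forall eps, 0 < eps -> exists N, forall n, (N <= n)%nat ->
        vnorm (vsub (u n) l) < eps.

Record BanachSpace := {
  bs_ns :> NormedSpace;
  bs_complete : complete bs_ns
}.

Record BanachLattice := {
  bl_bs :> BanachSpace;
  vle : bl_bs -> bl_bs -> Prop;
  vjoin : bl_bs -> bl_bs -> bl_bs;
  vle_refl : forall x, vle x x;
  vle_trans : forall x y z, vle x y -> vle y z -> vle x z;
  vle_anti : forall x y, vle x y -> vle y x -> x = y;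
  vle_add : forall x y z, vle x y -> vle (vadd x z) (vadd y z);
  vle_scal : forall a x y, 0 <= a -> vle x y -> vle (vscal a x) (vscal a y);
  vjoin_ubl : forall x y, vle x (vjoin x y);
  vjoin_ubr : forall x y, vle y (vjoin x y);
  vjoin_lub : forall x y z, vle x z -> vle y z -> vle (vjoin x y) z;
  vnorm_lattice : forall x y,
    vle (vjoin x (vopp x)) (vjoin y (vopp y)) -> vnorm x <= vnorm y
}.
Arguments vle {_}. Arguments vjoin {_}.

Definition is_linear_functional (X : NormedSpace) (f : X -> R) : Prop :=
  (forall x y, f (vadd x y) = f x + f y) /\ (forall a x, f (vscal a x) = a * f x).

Definition in_dual (X : NormedSpace) (f : X -> R) : Prop :=
  is_linear_functional X f /\ exists M, forall x, Rabs (f x) <= M * vnorm x.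

(** Elements of the bidual the bidual: bounded linear functionals on the dual,
    where the dual carries the operator norm (|Phi f| <= C * ||f|| is written
    out as: |Phi f| <= C * M whenever M >= 0 bounds f). *)
Definition in_bidual (X : NormedSpace) (Phi : (X -> R) -> R) : Prop :=
  (forall f g, in_dual X f -> in_dual X g ->
      Phi (fun x => f x + g x) = Phi f + Phi g) /\
  (forall a f, in_dual X f -> Phi (fun x => a * f x) = a * Phi f) /\
  (exists C, forall f M, in_dual X f -> 0 <= M ->
      (forall x, Rabs (f x) <= M * vnorm x) -> Rabs (Phi f) <= C * M).

Definition weakly_null (X : NormedSpace) (xs : nat -> X -> R) : Prop :=
  forall Phi, in_bidual X Phi -> Un_cv (fun n => Phi (xs n)) 0.

(* The subsequence is chosen so that some Phi in the bidual stays away from 0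
   on it, say |Phi x*_{n_k}| >= eps, with |Phi f| <= C ||f||.  The heart of the
   proof is a finite-dimensional Goldstine lemma: for finitely many functionals
   f_k, the point (Phi f_k / C)_k lies in the closure of the image of the unit
   ball under x |-> (f_k x)_k.  Otherwise the squared distance D of this image
   to it has a positive infimum d; at a near-minimiser x0 the first variation
   of D shows that g = sum_k (Phi f_k / C - f_k x0) f_k has norm below
   g x0 + d/2, while Phi g = C (D x0 + g x0) >= C (d + g x0), contradicting
   |Phi g| <= C ||g||.  Taking x with |f_k x - Phi f_k / C| < eps/(2C) then
   gives |f_k x| >= eps/(2C); normalising x, and replacing it by |x| in a
   Banach lattice with positive functionals, yields x_F. *)
From Stdlib Require Import Reals List Lra Classical ClassicalEpsilon
  FunctionalExtensionality.
Open Scope R_scope.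

Section NormedSpaceFacts.

Variable X : NormedSpace.

Lemma vadd0r (x : X) : vadd x vzero = x.
Proof. rewrite vaddC, vadd0. reflexivity. Qed.

Lemma vaddI (x y z : X) : vadd x y = vadd x z -> y = z.
Proof.
  intro H.
  assert (H0 : vadd (vopp x) (vadd x y) = vadd (vopp x) (vadd x z)) by (rewrite H; reflexivity).
  rewrite !vaddA, (vaddC X (vopp x) x), vaddN, !vadd0 in H0. exact H0.
Qed.

Lemma vscal0r a : vscal a (@vzero X) = vzero.
Proof. apply (vaddI (vscal a vzero)). rewrite <- vscalDr, vadd0, vadd0r. reflexivity. Qed.

Lemma vscal0l (x : X) : vscal 0 x = vzero.
Proof. apply (vaddI (vscal 0 x)). rewrite <- vscalDl, Rplus_0_r, vadd0r. reflexivity. Qed.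

Lemma vopp_scalN1 (x : X) : vopp x = vscal (-1) x.
Proof.
  apply (vaddI x). rewrite vaddN.
  rewrite <- (vscal1 X x) at 1. rewrite <- vscalDl, Rplus_opp_r, vscal0l. reflexivity.
Qed.

Lemma vnorm0 : vnorm (@vzero X) = 0.
Proof. rewrite <- (vscal0l vzero), vnormZ, Rabs_R0. ring. Qed.

Lemma vnormN (x : X) : vnorm (vopp x) = vnorm x.
Proof. rewrite vopp_scalN1, vnormZ, Rabs_left by lra. ring. Qed.

Lemma vnorm_ge0 (x : X) : 0 <= vnorm x.
Proof. pose proof (vnorm_triangle X x (vopp x)) as H. rewrite vaddN, vnorm0, vnormN in H. lra. Qed.

Lemma vnorm_gt0 (x : X) : x <> vzero -> 0 < vnorm x.
Proof.
  intro Hx. destruct (vnorm_ge0 x) as [|H0]; [assumption|].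
  now destruct (Hx (vnorm_eq0 X x (eq_sym H0))).
Qed.

Lemma vnorm_normalize (x : X) : 0 < vnorm x -> vnorm (vscal (/ vnorm x) x) = 1.
Proof. intro Hx. rewrite vnormZ, Rabs_pos_eq by (left; apply Rinv_0_lt_compat, Hx). field. lra. Qed.

Section LinearFunctional.

Variable f : X -> R.
Hypothesis f_lin : is_linear_functional X f.

Lemma linear0 : f vzero = 0.
Proof. destruct f_lin as [_ Hs]. rewrite <- (vscal0l vzero), Hs. ring. Qed.

Lemma linearN x : f (vopp x) = - f x.
Proof. destruct f_lin as [_ Hs]. rewrite vopp_scalN1, Hs. ring. Qed.

Lemma linear_normalize_ge (x : X) :
  0 < vnorm x -> vnorm x <= 1 -> Rabs (f x) <= Rabs (f (vscal (/ vnorm x) x)).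
Proof.
  intros Hp H1. destruct f_lin as [_ Hs].
  rewrite Hs, Rabs_mult, (Rabs_pos_eq (/ vnorm x)) by (left; apply Rinv_0_lt_compat, Hp).
  rewrite <- (Rmult_1_l (Rabs (f x))) at 1.
  apply Rmult_le_compat_r; [apply Rabs_pos|].
  rewrite <- Rinv_1. apply Rinv_le_contravar; assumption.
Qed.

Lemma linear_bound_of_ball (M : R) :
  (forall x, vnorm x <= 1 -> f x <= M) -> forall x, Rabs (f x) <= M * vnorm x.
Proof.
  intros HM.
  assert (Habs : forall x, vnorm x <= 1 -> Rabs (f x) <= M).
  { intros x Hx. apply Rabs_le. split; [|exact (HM x Hx)].
    pose proof (HM (vopp x)) as H. rewrite vnormN, linearN in H. specialize (H Hx). lra. }
  intros x. destruct (classic (x = vzero)) as [->|Hx].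
  - rewrite linear0, vnorm0, Rabs_R0, Rmult_0_r. lra.
  - pose proof (vnorm_gt0 x Hx) as Hp.
    pose proof (Habs _ (Req_le _ _ (vnorm_normalize x Hp))) as H.
    destruct f_lin as [_ Hs].
    rewrite Hs, Rabs_mult, Rabs_pos_eq in H by (left; apply Rinv_0_lt_compat, Hp).
    apply (Rmult_le_reg_l (/ vnorm x)); [apply Rinv_0_lt_compat, Hp|].
    replace (/ vnorm x * (M * vnorm x)) with M by (field; lra). exact H.
Qed.

End LinearFunctional.

Lemma in_dual_ball_bound (f : X -> R) :
  in_dual X f -> exists M, forall x, vnorm x <= 1 -> Rabs (f x) <= M.
Proof.
  intros [_ [M HM]]. exists (Rabs M). intros x Hx.
  eapply Rle_trans; [apply HM|].
  pose proof (vnorm_ge0 x). pose proof (Rle_abs M). pose proof (Rabs_pos M).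
  apply Rle_trans with (Rabs M * vnorm x); [apply Rmult_le_compat_r; lra|].
  rewrite <- (Rmult_1_r (Rabs M)) at 2. apply Rmult_le_compat_l; lra.
Qed.

Lemma in_dual_zero : in_dual X (fun _ => 0).
Proof.
  split; [split; intros; ring|]. exists 0. intros. rewrite Rabs_R0. lra.
Qed.

Lemma in_dual_add (f g : X -> R) :
  in_dual X f -> in_dual X g -> in_dual X (fun x => f x + g x).
Proof.
  intros [[Hfa Hfs] [Mf HMf]] [[Hga Hgs] [Mg HMg]]. split; [split|].
  - intros x y. rewrite Hfa, Hga. ring.
  - intros a x. rewrite Hfs, Hgs. ring.
  - exists (Mf + Mg). intros x. eapply Rle_trans; [apply Rabs_triang|].
    pose proof (HMf x). pose proof (HMg x). lra.
Qed.

Lemma in_dual_scal (a : R) (f : X -> R) : in_dual X f -> in_dual X (fun x => a * f x).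
Proof.
  intros [[Ha Hs] [M HM]]. split; [split|].
  - intros x y. rewrite Ha. ring.
  - intros b x. rewrite Hs. ring.
  - exists (Rabs a * M). intros x. rewrite Rabs_mult, Rmult_assoc.
    apply Rmult_le_compat_l; [apply Rabs_pos|apply HM].
Qed.

End NormedSpaceFacts.

Fixpoint rsum (F : list nat) (h : nat -> R) : R :=
  match F with nil => 0 | k :: F' => h k + rsum F' h end.

Lemma rsum_ext F h1 h2 : (forall k, In k F -> h1 k = h2 k) -> rsum F h1 = rsum F h2.
Proof.
  induction F as [|k F IH]; simpl; intros H; [reflexivity|].
  rewrite H, IH by auto. reflexivity.
Qed.

Lemma rsumD F h1 h2 : rsum F (fun k => h1 k + h2 k) = rsum F h1 + rsum F h2.
Proof. induction F as [|k F IH]; simpl; [ring|rewrite IH; ring]. Qed.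

Lemma rsumZ F c h : rsum F (fun k => c * h k) = c * rsum F h.
Proof. induction F as [|k F IH]; simpl; [ring|rewrite IH; ring]. Qed.

Lemma rsum_ge0 F h : (forall k, 0 <= h k) -> 0 <= rsum F h.
Proof.
  intros H. induction F as [|k F IH]; simpl; [lra|]. pose proof (H k). lra.
Qed.

Lemma rsum_term_le F h k : (forall j, 0 <= h j) -> In k F -> h k <= rsum F h.
Proof.
  intros H. induction F as [|j F IH]; simpl; [contradiction|].
  intros [<-|Hk].
  - pose proof (rsum_ge0 F h H). lra.
  - pose proof (IH Hk). pose proof (H j). lra.
Qed.

Definition lincomb {X : NormedSpace} (F : list nat) (a : nat -> R) (f : nat -> X -> R)
  : X -> R := fun x => rsum F (fun k => a k * f k x).

Definition sqdist {X : NormedSpace} (F : list nat) (f : nat -> X -> R) (q : nat -> R)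
  (x : X) : R := rsum F (fun k => (f k x - q k) ^ 2).

Lemma sqdist_lt_sqr_lower_bound (X : NormedSpace) (F : list nat) (f : nat -> X -> R)
  (q : nat -> R) (x : X) (delta : R) :
  0 < delta -> sqdist F f q x < delta ^ 2 ->
  (forall k, In k F -> 2 * delta <= Rabs (q k)) ->
  forall k, In k F -> delta <= Rabs (f k x).
Proof.
  intros Hdelta HD Hq k Hk.
  assert (Hsq : (f k x - q k) ^ 2 < delta ^ 2).
  { eapply Rle_lt_trans; [|exact HD].
    apply (rsum_term_le _ (fun k => (f k x - q k) ^ 2)); [intros; apply pow2_ge_0|exact Hk]. }
  assert (Hclose : Rabs (f k x - q k) < delta).
  { rewrite <- (pow2_abs (f k x - q k)) in Hsq. pose proof (Rabs_pos (f k x - q k)). nra. }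
  rewrite <- Rabs_Ropp, Ropp_minus_distr in Hclose.
  pose proof (Rabs_triang (q k - f k x) (f k x)) as Ht.
  replace (q k - f k x + f k x) with (q k) in Ht by ring.
  pose proof (Hq k Hk). lra.
Qed.

Lemma exists_inf_lower_bounded (A : Type) (P : A -> Prop) (D : A -> R) (m : R) :
  (exists a, P a) -> (forall a, P a -> m <= D a) ->
  exists d, (forall a, P a -> d <= D a) /\
            forall tau, 0 < tau -> exists a, P a /\ D a < d + tau.
Proof.
  intros [a0 Ha0] Hm.
  pose (E := fun r => exists a, P a /\ r = - D a).
  assert (Hbd : bound E) by (exists (- m); intros r [a [Ha ->]]; pose proof (Hm a Ha); lra).
  destruct (completeness E Hbd (ex_intro _ _ (ex_intro _ a0 (conj Ha0 eq_refl))))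
    as [s [Hub Hleast]].
  exists (- s). split.
  - intros a Ha. assert (- D a <= s) by (apply Hub; exists a; auto). lra.
  - intros tau Htau. apply NNPP; intro Hno.
    assert (s <= s - tau); [|lra].
    apply Hleast. intros r [a [Ha ->]].
    apply Ropp_le_cancel. rewrite Ropp_involutive.
    apply Rnot_lt_le. intro Hlt. apply Hno. exists a. split; [exact Ha|lra].
Qed.

Section FiniteGoldstine.

Variable X : NormedSpace.
Variable f : nat -> X -> R.
Hypothesis f_dual : forall k, in_dual X (f k).

Lemma in_dual_lincomb (F : list nat) (a : nat -> R) : in_dual X (lincomb F a f).
Proof.
  unfold lincomb. induction F as [|k F' IH]; simpl.
  - apply in_dual_zero.
  - apply (in_dual_add X (fun x => a k * f k x)); [apply in_dual_scal, f_dual|exact IH].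
Qed.

Variable Phi : (X -> R) -> R.
Hypothesis Phi_add : forall g h, in_dual X g -> in_dual X h ->
  Phi (fun x => g x + h x) = Phi g + Phi h.
Hypothesis Phi_scal : forall c g, in_dual X g -> Phi (fun x => c * g x) = c * Phi g.

Lemma Phi_lincomb (F : list nat) (a : nat -> R) :
  Phi (lincomb F a f) = rsum F (fun k => a k * Phi (f k)).
Proof.
  unfold lincomb. induction F as [|k F' IH]; simpl.
  - replace (fun _ : X => 0) with (fun x : X => 0 * (fun _ : X => 0) x)
      by (apply functional_extensionality; intros; ring).
    rewrite Phi_scal by apply in_dual_zero. ring.
  - rewrite (Phi_add (fun x => a k * f k x)), Phi_scal, IH;
      [reflexivity|apply f_dual|apply in_dual_scal, f_dual|].
    apply (in_dual_lincomb F' a).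
Qed.

Variable F : list nat.
Variable q : nat -> R.

Lemma sqdist_segment (t : R) (x0 x : X) :
  sqdist F f q (vadd (vscal (1 - t) x0) (vscal t x)) =
  sqdist F f q x0 - 2 * t * (lincomb F (fun k => q k - f k x0) f x
                             - lincomb F (fun k => q k - f k x0) f x0)
  + t ^ 2 * rsum F (fun k => (f k x - f k x0) ^ 2).
Proof.
  transitivity (rsum F (fun k => (f k x0 - q k) ^ 2
    + (-2 * t) * ((q k - f k x0) * f k x + -1 * ((q k - f k x0) * f k x0))
    + t ^ 2 * (f k x - f k x0) ^ 2)).
  - apply rsum_ext. intros k _.
    destruct (f_dual k) as [[Ha Hs] _]. rewrite Ha, !Hs. ring.
  - rewrite !rsumD, !rsumZ, rsumD, rsumZ. unfold sqdist, lincomb. ring.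
Qed.

Lemma diffsq_ball_bound :
  exists B, 0 <= B /\ forall x y, vnorm x <= 1 -> vnorm y <= 1 ->
    rsum F (fun k => (f k x - f k y) ^ 2) <= B.
Proof.
  induction F as [|k F' IH]; cbn [rsum].
  - exists 0. split; intros; lra.
  - destruct IH as [B [HB0 HB]]. destruct (in_dual_ball_bound X _ (f_dual k)) as [M HM].
    exists ((2 * M) ^ 2 + B). split; [pose proof (pow2_ge_0 (2 * M)); lra|].
    intros x y Hx Hy.
    assert (Hd : Rabs (f k x - f k y) <= 2 * M).
    { unfold Rminus. eapply Rle_trans; [apply Rabs_triang|].
      rewrite Rabs_Ropp. pose proof (HM x Hx). pose proof (HM y Hy). lra. }
    rewrite <- (pow2_abs (f k x - f k y)). pose proof (Rabs_pos (f k x - f k y)).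
    pose proof (HB x y Hx Hy).
    assert (Rabs (f k x - f k y) ^ 2 <= (2 * M) ^ 2) by (apply pow_incr; split; lra). lra.
Qed.

(* First variation of [sqdist] at a near-minimiser [x0], along segments
   towards the points of the unit ball. *)
Lemma near_min_residual_bound (d t B : R) (x0 : X) :
  0 < d -> 0 < t <= 1 -> t * B <= d / 2 ->
  (forall x y, vnorm x <= 1 -> vnorm y <= 1 -> rsum F (fun k => (f k x - f k y) ^ 2) <= B) ->
  (forall x, vnorm x <= 1 -> d <= sqdist F f q x) ->
  vnorm x0 <= 1 -> sqdist F f q x0 < d + t * d / 2 ->
  forall x, vnorm x <= 1 ->
    lincomb F (fun k => q k - f k x0) f x <= lincomb F (fun k => q k - f k x0) f x0 + d / 2.
Proof.
  intros Hd Ht HtB HB Hmin Hx0 Hnear x Hx.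
  set (xt := vadd (vscal (1 - t) x0) (vscal t x)).
  assert (Hxt : vnorm xt <= 1).
  { unfold xt. eapply Rle_trans; [apply vnorm_triangle|].
    rewrite !vnormZ, !Rabs_pos_eq by lra.
    apply Rle_trans with ((1 - t) * 1 + t * 1); [|lra].
    apply Rplus_le_compat; apply Rmult_le_compat_l; lra. }
  pose proof (Hmin xt Hxt) as Hdxt. unfold xt in Hdxt. rewrite sqdist_segment in Hdxt.
  pose proof (HB x x0 Hx Hx0) as HS.
  set (S := rsum F (fun k => (f k x - f k x0) ^ 2)) in *.
  set (gx := lincomb F (fun k => q k - f k x0) f x) in *.
  set (gx0 := lincomb F (fun k => q k - f k x0) f x0) in *.
  assert (HtS : t * S <= t * B) by (apply Rmult_le_compat_l; lra).
  assert (2 * t * (gx - gx0) < t * (d / 2 + t * S)) by nra.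
  assert (2 * (gx - gx0) < d / 2 + t * S) by (apply (Rmult_lt_reg_l t); lra).
  lra.
Qed.

Variable C : R.
Hypothesis C_pos : 0 < C.
Hypothesis Phi_bound : forall g M, in_dual X g -> 0 <= M ->
  (forall x, Rabs (g x) <= M * vnorm x) -> Rabs (Phi g) <= C * M.
Hypothesis Phi_f : forall k, Phi (f k) = C * q k.

Lemma sqdist_inf_nonpos (d : R) :
  (forall x, vnorm x <= 1 -> d <= sqdist F f q x) ->
  (forall tau, 0 < tau -> exists x, vnorm x <= 1 /\ sqdist F f q x < d + tau) ->
  d <= 0.
Proof.
  intros Hmin Hnear. apply Rnot_lt_le. intro Hd.
  destruct diffsq_ball_bound as [B [HB0 HB]].
  set (t := d / (2 * (B + d))).
  assert (Ht : 0 < t <= 1).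
  { unfold t. split; [apply Rdiv_lt_0_compat; lra|].
    apply Rmult_le_reg_r with (2 * (B + d)); [lra|]. field_simplify; lra. }
  assert (HtB : t * B <= d / 2).
  { unfold t. apply Rmult_le_reg_r with (2 * (B + d)); [lra|]. field_simplify; nra. }
  destruct (Hnear (t * d / 2)) as [x0 [Hx0 Hx0d]]; [nra|].
  set (a := fun k => q k - f k x0).
  set (g := lincomb F a f).
  pose proof (near_min_residual_bound d t B x0 Hd Ht HtB HB Hmin Hx0 Hx0d) as Hg.
  change (forall x, vnorm x <= 1 -> g x <= g x0 + d / 2) in Hg.
  assert (Hgb : forall x, Rabs (g x) <= (g x0 + d / 2) * vnorm x).
  { apply linear_bound_of_ball; [apply (in_dual_lincomb F a)|exact Hg]. }
  assert (HM : 0 <= g x0 + d / 2).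
  { pose proof (Hg vzero ltac:(rewrite vnorm0; lra)) as H0.
    rewrite (linear0 X g) in H0 by apply (in_dual_lincomb F a). lra. }
  (* Phi g = C * sum_k a_k q_k = C * (sqdist x0 + g x0), as q_k = a_k + f_k x0. *)
  assert (HPhi : Phi g = C * (sqdist F f q x0 + g x0)).
  { unfold g. rewrite Phi_lincomb. unfold sqdist, lincomb.
    rewrite <- rsumD, <- rsumZ. apply rsum_ext. intros k _.
    rewrite Phi_f. unfold a. ring. }
  pose proof (Phi_bound g _ (in_dual_lincomb F a) HM Hgb) as Hbd.
  rewrite HPhi in Hbd. pose proof (Rle_abs (C * (sqdist F f q x0 + g x0))).
  pose proof (Hmin x0 Hx0). nra.
Qed.

Theorem finite_goldstine (eta : R) : 0 < eta ->
  exists x, vnorm x <= 1 /\ sqdist F f q x < eta.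
Proof.
  intros Heta.
  destruct (exists_inf_lower_bounded X (fun x => vnorm x <= 1) (sqdist F f q) 0)
    as [d [Hmin Hnear]].
  - exists vzero. rewrite vnorm0. lra.
  - intros x _. apply rsum_ge0. intros k. apply pow2_ge_0.
  - pose proof (sqdist_inf_nonpos d Hmin Hnear).
    destruct (Hnear eta Heta) as [x [Hx Hdx]]. exists x. split; [exact Hx|lra].
Qed.

End FiniteGoldstine.

Fixpoint subseq_of (h : nat -> nat) (k : nat) : nat :=
  match k with O => h O | S k' => h (S (subseq_of h k')) end.

Lemma not_cv0_subseq_away (u : nat -> R) :
  ~ Un_cv u 0 -> exists (phi : nat -> nat) (eps : R),
    (forall k, (phi k < phi (S k))%nat) /\ 0 < eps /\ forall k, eps <= Rabs (u (phi k)).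
Proof.
  intros Hncv.
  assert (Hinf : exists eps, 0 < eps /\ forall N, exists n, (N <= n)%nat /\ eps <= Rabs (u n)).
  { apply NNPP. intro Hno. apply Hncv. intros eps Heps.
    apply NNPP. intro Hn. apply Hno. exists eps. split; [exact Heps|].
    intros N. apply NNPP. intro Hm. apply Hn. exists N. intros n Hn'.
    unfold R_dist. rewrite Rminus_0_r. apply Rnot_le_lt. intro Hl. apply Hm. exists n. auto. }
  destruct Hinf as [eps [Heps Hinf]].
  destruct (choice _ Hinf) as [h Hh].
  exists (subseq_of h), eps. split; [|split; [exact Heps|]].
  - intros k. exact (proj1 (Hh (S (subseq_of h k)))).
  - intros [|k]; apply Hh.
Qed.

Lemma not_weakly_null_norming (X : NormedSpace) (xs : nat -> X -> R) :
  (forall n, in_dual X (xs n)) -> ~ weakly_null X xs ->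
  exists (phi : nat -> nat) (delta : R),
    (forall k, (phi k < phi (S k))%nat) /\ 0 < delta /\
    forall F : list nat, exists x : X, 0 < vnorm x <= 1 /\
      forall k, In k F -> delta <= Rabs (xs (phi k) x).
Proof.
  intros Hd Hnw. apply not_all_ex_not in Hnw. destruct Hnw as [Phi HP].
  apply imply_to_and in HP. destruct HP as [[Hadd [Hsc [C0 HC0]]] Hncv].
  destruct (not_cv0_subseq_away _ Hncv) as [phi [eps [Hphi [Heps Hfar]]]].
  set (C := Rmax C0 1).
  assert (HC : 0 < C) by (pose proof (Rmax_r C0 1); unfold C; lra).
  assert (Hbound : forall g M, in_dual X g -> 0 <= M ->
    (forall x, Rabs (g x) <= M * vnorm x) -> Rabs (Phi g) <= C * M).
  { intros g M Hg HM Hb. eapply Rle_trans; [apply (HC0 g M Hg HM Hb)|].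
    apply Rmult_le_compat_r; [lra|apply Rmax_l]. }
  set (delta := eps / (2 * C)).
  assert (Hdelta : 0 < delta) by (unfold delta; apply Rdiv_lt_0_compat; lra).
  exists phi, delta. split; [exact Hphi|split; [exact Hdelta|]].
  intros F.
  set (f := fun k => xs (phi k)). set (q := fun k => Phi (f k) / C).
  (* The extra index 0 keeps x away from 0 even when F is empty. *)
  destruct (finite_goldstine X f (fun k => Hd (phi k)) Phi Hadd Hsc (0%nat :: F) q C HC
              Hbound (fun k => ltac:(unfold q; field; lra)) (delta ^ 2))
    as [x [Hx HD]]; [apply pow_lt, Hdelta|].
  assert (Hq : forall k, In k (0%nat :: F) -> 2 * delta <= Rabs (q k)).
  { intros k _. unfold q, Rdiv.
    rewrite Rabs_mult, (Rabs_pos_eq (/ C)) by (left; apply Rinv_0_lt_compat, HC).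
    replace (2 * delta) with (eps * / C) by (unfold delta; field; lra).
    apply Rmult_le_compat_r; [left; apply Rinv_0_lt_compat, HC|apply Hfar]. }
  pose proof (sqdist_lt_sqr_lower_bound _ _ _ _ _ _ Hdelta HD Hq) as Hfar_x.
  exists x. split; [split; [|exact Hx]|intros k Hk; apply Hfar_x; right; exact Hk].
  apply vnorm_gt0. intros ->.
  pose proof (Hfar_x 0%nat (or_introl eq_refl)) as H0.
  rewrite (linear0 X (f 0%nat)), Rabs_R0 in H0 by apply Hd. lra.
Qed.

Section LatticeFacts.

Variable E : BanachLattice.

Definition vabs (x : E) : E := vjoin x (vopp x).

Lemma vabs_ge0 (x : E) : vle vzero (vabs x).
Proof.
  set (j := vabs x).
  pose proof (vle_add E x j (vopp x) (vjoin_ubl E x (vopp x))) as H1. rewrite vaddN in H1.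
  pose proof (vle_add E (vopp x) j j (vjoin_ubr E x (vopp x))) as H2.
  rewrite (vaddC _ (vopp x) j) in H2.
  pose proof (vle_trans E _ _ _ H1 H2) as H3.
  replace (vadd j j) with (vscal 2 j) in H3
    by (rewrite <- (vscal1 E j) at 2 3; rewrite <- vscalDl; f_equal; ring).
  pose proof (vle_scal E (/ 2) _ _ ltac:(lra) H3) as H4.
  rewrite vscal0r, vscalA, Rinv_l, vscal1 in H4 by lra. exact H4.
Qed.

Lemma vabs_idem (x : E) : vabs (vabs x) = vabs x.
Proof.
  pose proof (vabs_ge0 x) as H0.
  pose proof (vle_add E vzero (vabs x) (vopp (vabs x)) H0) as H1. rewrite vadd0, vaddN in H1.
  apply vle_anti.
  - apply vjoin_lub; [apply vle_refl|exact (vle_trans E _ _ _ H1 H0)].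
  - apply vjoin_ubl.
Qed.

Lemma vnorm_vabs (x : E) : vnorm (vabs x) = vnorm x.
Proof.
  apply Rle_antisym; apply vnorm_lattice; fold (vabs x) (vabs (vabs x));
    rewrite vabs_idem; apply vle_refl.
Qed.

Lemma abs_le_positive_functional (f : E -> R) (x : E) :
  is_linear_functional E f -> (forall y, vle vzero y -> 0 <= f y) ->
  Rabs (f x) <= f (vabs x).
Proof.
  intros Hl Hp.
  pose proof (vle_add E x (vabs x) (vopp x) (vjoin_ubl E x (vopp x))) as H1.
  rewrite vaddN in H1.
  pose proof (vle_add E (vopp x) (vabs x) x (vjoin_ubr E x (vopp x))) as H2.
  rewrite (vaddC _ (vopp x) x), vaddN in H2.
  pose proof (Hp _ H1) as P1. pose proof (Hp _ H2) as P2.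
  destruct Hl as [Ha Hs]. rewrite Ha, (linearN E f (conj Ha Hs)) in P1. rewrite Ha in P2.
  apply Rabs_le. lra.
Qed.

End LatticeFacts.

Theorem lemma4p1 :
  (forall (X : BanachSpace) (xs : nat -> X -> R),
     (forall n, in_dual X (xs n)) ->
     ~ weakly_null X xs ->
     exists (phi : nat -> nat) (delta : R),
       (forall k, (phi k < phi (S k))%nat) /\ 0 < delta /\
       forall F : list nat, exists x : X,
         vnorm x = 1 /\ forall k, In k F -> delta <= Rabs (xs (phi k) x))
  /\
  (forall (E : BanachLattice) (xs : nat -> E -> R),
     (forall n, in_dual E (xs n)) ->
     (forall n (x : E), vle vzero x -> 0 <= xs n x) ->
     ~ weakly_null E xs ->
     exists (phi : nat -> nat) (delta : R),
       (forall k, (phi k < phi (S k))%nat) /\ 0 < delta /\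
       forall F : list nat, exists x : E,
         vle vzero x /\ vnorm x = 1 /\
         forall k, In k F -> delta <= Rabs (xs (phi k) x)).
Proof.
  split.
  - intros X xs Hd Hnw.
    destruct (not_weakly_null_norming X xs Hd Hnw) as [phi [delta [Hphi [Hdel HF]]]].
    exists phi, delta. do 2 (split; [assumption|]). intros F.
    destruct (HF F) as [x [[Hp Hx] Hk]].
    exists (vscal (/ vnorm x) x). split; [exact (vnorm_normalize X x Hp)|].
    intros k Hin. eapply Rle_trans; [apply Hk, Hin|]. apply linear_normalize_ge; [apply Hd|assumption..].
  - intros E xs Hd Hpos Hnw.
    destruct (not_weakly_null_norming E xs Hd Hnw) as [phi [delta [Hphi [Hdel HF]]]].
    exists phi, delta. do 2 (split; [assumption|]). intros F.
    destruct (HF F) as [x [Hx Hk]]. rewrite <- (vnorm_vabs E x) in Hx. destruct Hx as [Hp Hx].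
    exists (vscal (/ vnorm (vabs E x)) (vabs E x)). split; [|split].
    + rewrite <- (vscal0r E (/ vnorm (vabs E x))).
      apply vle_scal; [left; apply Rinv_0_lt_compat, Hp|apply vabs_ge0].
    + exact (vnorm_normalize E _ Hp).
    + intros k Hin. eapply Rle_trans; [apply Hk, Hin|].
      eapply Rle_trans; [apply abs_le_positive_functional; [apply Hd|apply Hpos]|].
      eapply Rle_trans; [apply Rle_abs|]. apply linear_normalize_ge; [apply Hd|assumption..].
Qed.
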